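(* Let $(X,D)$ be a JS-metric space with a partial order $\le$, and let $F:X^2\to X$ have the mixed monotone property and satisfy, for some $k\in[0,1)$, $D(F(x,y),F(u,v))\le \frac{k}{2}(D(x,u)+D(y,v))$ for all $x\ge u$, $y\le v$. Suppose $(x,y)$ and $(x^*,y^* )$ are coupled fixed points of $F$ that are incomparable in $X^2$, and there exists $(z_1,z_2)\in X^2$ which is an upper bound or a lower bound (in $X^2$) of both $(x,y)$ and $(x^*,y^* )$, with $D(x,z_1),D(y,z_2),D(x^*,z_1),D(y^*,z_2)<\infty$. Then $x=x^*$ and $y=y^*$.
   Context: Arithmetic is carried out in the extended reals. $(X,D)$ is a JS-metric space: $D:X\times X\to[0,\infty]$ satisfies (D1) $D(x,y)=0\Rightarrow x=y$; (D2) $D(x,y)=D(y,x)$; (D3) there exists $c>0$ such that for all $x,y\in X$ and every sequence $(x_n)$ with $\lim_n D(x_n,x)=0$, $D(x,y)\le c\limsup_n D(x_n,y)$. $F$ has the mixed monotone property if $x_1\le x_2\Rightarrow F(x_1,y)\le F(x_2,y)$ and $y_1\le y_2\Rightarrow F(x,y_1)\ge F(x,y_2)$. A coupled fixed point is $(x,y)$ with $x=F(x,y)$, $y=F(y,x)$. The partial order on $X^2$ is $(u,v)\le(x,y)\iff u\le x$ and $v\ge y$; two elements are comparable if one is $\le$ the other. *)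

From Stdlib Require Import Reals.
Open Scope R_scope.

(* Extended nonnegative reals [0, +oo] represented as R + {+oo}. *)
Inductive ER : Type := Fin (r : R) | PInf.

Definition ER_le (a b : ER) : Prop :=
  match a, b with
  | Fin x, Fin y => x <= y
  | _, PInf => True
  | PInf, Fin _ => False
  end.

Definition ER_add (a b : ER) : ER :=
  match a, b with
  | Fin x, Fin y => Fin (x + y)
  | _, _ => PInf
  end.

(* scalar multiplication by a nonnegative real; convention 0 * oo = 0 *)
Definition ER_scal (r : R) (a : ER) : ER :=
  match a with
  | Fin x => Fin (r * x)
  | PInf => if Req_EM_T r 0 then Fin 0 else PInf
  end.

Definition ER_is_sup (S : ER -> Prop) (l : ER) : Prop :=
  (forall z, S z -> ER_le z l) /\ (forall b, (forall z, S z -> ER_le z b) -> ER_le l b).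

Definition ER_is_inf (S : ER -> Prop) (l : ER) : Prop :=
  (forall z, S z -> ER_le l z) /\ (forall b, (forall z, S z -> ER_le b z) -> ER_le b l).

Definition ER_is_limsup (u : nat -> ER) (l : ER) : Prop :=
  exists s : nat -> ER,
    (forall n, ER_is_sup (fun z => exists m, (n <= m)%nat /\ z = u m) (s n)) /\
    ER_is_inf (fun z => exists n, z = s n) l.

Definition ER_lim0 (u : nat -> ER) : Prop :=
  forall eps, 0 < eps -> exists N, forall n, (N <= n)%nat -> ER_le (u n) (Fin eps).

Definition is_JS_metric {X : Type} (D : X -> X -> ER) : Prop :=
  (forall x y, ER_le (Fin 0) (D x y)) /\
  (forall x y, D x y = Fin 0 -> x = y) /\
  (forall x y, D x y = D y x) /\
  (exists c, 0 < c /\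
     forall (x y : X) (xn : nat -> X),
       ER_lim0 (fun n => D (xn n) x) ->
       forall l, ER_is_limsup (fun n => D (xn n) y) l ->
         ER_le (D x y) (ER_scal c l)).

Definition is_partial_order {X : Type} (le : X -> X -> Prop) : Prop :=
  (forall x, le x x) /\
  (forall x y, le x y -> le y x -> x = y) /\
  (forall x y z, le x y -> le y z -> le x z).

Definition mixed_monotone {X : Type} (le : X -> X -> Prop) (F : X -> X -> X) : Prop :=
  (forall x1 x2 y, le x1 x2 -> le (F x1 y) (F x2 y)) /\
  (forall x y1 y2, le y1 y2 -> le (F x y2) (F x y1)).

Definition coupled_fixed_point {X : Type} (F : X -> X -> X) (x y : X) : Prop :=
  x = F x y /\ y = F y x.

Definition le2 {X : Type} (le : X -> X -> Prop) (p q : X * X) : Prop :=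
  le (fst p) (fst q) /\ le (snd q) (snd p).

Definition comparable2 {X : Type} (le : X -> X -> Prop) (p q : X * X) : Prop :=
  le2 le p q \/ le2 le q p.

(** The iterates (a_n, b_n) of the map (p, q) |-> (F p q, F q p) started at the common
    bound (z1, z2) stay comparable with every coupled fixed point comparable to (z1, z2),
    because that map is monotone for the product order on X^2.  The contraction condition
    then gives D(a_n, u) + D(b_n, v) <= k^n (D(z1, u) + D(z2, v)) for both fixed points
    (u, v), so a_n tends to x and to x', and b_n to y and to y'.  Limits are unique in a
    JS-metric space: (D3) applied to a_n -> x with limsup D(a_n, x') = 0 gives D(x, x') = 0. *)
From Stdlib Require Import Reals Lra.
Open Scope R_scope.

Lemma ER_le_trans a b c : ER_le a b -> ER_le b c -> ER_le a c.
Proof. destruct a, b, c; simpl; intros; try lra; tauto. Qed.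

Lemma ER_le_scal k a r : 0 <= k -> ER_le a (Fin r) -> ER_le (ER_scal k a) (Fin (k * r)).
Proof.
  intros hk; destruct a as [s|]; simpl; [|tauto].
  intros hs; apply Rmult_le_compat_l; assumption.
Qed.

Lemma ER_add_comm a b : ER_add a b = ER_add b a.
Proof. destruct a, b; simpl; auto; f_equal; ring. Qed.

Lemma ER_add_le_l a b c : ER_le (Fin 0) b -> ER_le (ER_add a b) c -> ER_le a c.
Proof. destruct a, b, c; simpl; intros; try lra; tauto. Qed.

(* The case [s = PInf], [k = 0] relies on the convention [0 * oo = 0]. *)
Lemma ER_add_le_scal k a b s : 0 <= k ->
  ER_le a (ER_scal (k / 2) s) -> ER_le b (ER_scal (k / 2) s) ->
  ER_le (ER_add a b) (ER_scal k s).
Proof.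
  intros hk; destruct a as [p|], b as [q|], s as [r|]; simpl;
    try destruct (Req_EM_T (k / 2) 0); try destruct (Req_EM_T k 0); simpl;
    intros; try tauto; lra.
Qed.

Lemma Un_cv_pow_scal k r : 0 <= k < 1 -> Un_cv (fun n => k ^ n * r) 0.
Proof.
  intros hk.
  rewrite <- (Rmult_0_l r).
  apply CV_mult.
  - intros eps heps.
    destruct (pow_lt_1_zero k ltac:(rewrite Rabs_pos_eq; lra) eps heps) as [N HN].
    exists N; intros n hn; unfold R_dist; rewrite Rminus_0_r; exact (HN n hn).
  - intros eps heps; exists 0%nat; intros n _; unfold R_dist; rewrite Rminus_diag, Rabs_R0; lra.
Qed.

Section DominatedSequences.

Variables (u : nat -> ER) (e : nat -> R).
Hypothesis (u_ge0 : forall n, ER_le (Fin 0) (u n)).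
Hypothesis (u_le_e : forall n, ER_le (u n) (Fin (e n))).
Hypothesis (e_cv0 : Un_cv e 0).

Lemma ER_lim0_dominated : ER_lim0 u.
Proof.
  intros eps heps.
  destruct (e_cv0 eps heps) as [N HN].
  exists N; intros n hn.
  apply (ER_le_trans _ _ _ (u_le_e n)); simpl.
  specialize (HN n hn); unfold R_dist in HN; rewrite Rminus_0_r in HN.
  pose proof (Rle_abs (e n)); lra.
Qed.

Let tail n z := exists m, (n <= m)%nat /\ u m = Fin z.

Let tail_bound n : bound (tail n).
Proof.
  destruct (cauchy_bound e (CV_Cauchy e (exist _ 0 e_cv0))) as [M hM].
  exists M; intros z [m [_ hz]].
  pose proof (u_le_e m) as h; rewrite hz in h; simpl in h.
  pose proof (hM (e m) (ex_intro _ m eq_refl)); lra.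
Qed.

Let tail_inhabited n : exists z, tail n z.
Proof.
  pose proof (u_le_e n) as h.
  destruct (u n) as [z|] eqn:hz; [|contradiction].
  exists z, n; auto.
Qed.

Let tail_sup n : R := proj1_sig (completeness _ (tail_bound n) (tail_inhabited n)).

Let tail_sup_spec n : is_lub (tail n) (tail_sup n).
Proof. exact (proj2_sig (completeness _ (tail_bound n) (tail_inhabited n))). Qed.

Lemma ER_is_limsup_dominated : ER_is_limsup u (Fin 0).
Proof.
  exists (fun n => Fin (tail_sup n)); split.
  - intros n; destruct (tail_sup_spec n) as [hub hleast]; split.
    + intros z [m [hm ->]].
      pose proof (u_le_e m) as h.
      destruct (u m) as [r|] eqn:hr; [|contradiction].
      apply hub; exists m; auto.
    + intros [r|] hb; simpl; [|exact I].
      apply hleast; intros z [m [hm hz]].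
      specialize (hb (u m) (ex_intro _ m (conj hm eq_refl))); rewrite hz in hb; exact hb.
  - split.
    + intros z [n ->]; simpl.
      pose proof (u_ge0 n) as h0; pose proof (u_le_e n) as h.
      destruct (u n) as [r|] eqn:hr; [|contradiction]; simpl in h0.
      assert (r <= tail_sup n) by (apply (tail_sup_spec n); exists n; auto).
      lra.
    + intros [r|] hb; simpl.
      2: exact (hb _ (ex_intro _ 0%nat eq_refl)).
      apply Rnot_lt_le; intros hr.
      destruct (e_cv0 (r / 2) ltac:(lra)) as [N HN].
      assert (hsup : tail_sup N <= r / 2).
      { apply (tail_sup_spec N); intros z [m [hm hz]].
        pose proof (u_le_e m) as h; rewrite hz in h; simpl in h.
        specialize (HN m hm); unfold R_dist in HN; rewrite Rminus_0_r in HN.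
        pose proof (Rle_abs (e m)); lra. }
      specialize (hb _ (ex_intro _ N eq_refl)); simpl in hb; lra.
Qed.

End DominatedSequences.

Lemma JS_limit_unique {X : Type} (D : X -> X -> ER) (a : nat -> X) (x x' : X)
    (e e' : nat -> R) :
  is_JS_metric D ->
  (forall n, ER_le (D (a n) x) (Fin (e n))) -> Un_cv e 0 ->
  (forall n, ER_le (D (a n) x') (Fin (e' n))) -> Un_cv e' 0 ->
  x = x'.
Proof.
  intros [hD0 [hD1 [_ [c [hc hD3]]]]] he hecv he' he'cv.
  pose proof (hD3 x x' a (ER_lim0_dominated _ _ he hecv) (Fin 0)
                (ER_is_limsup_dominated _ _ (fun n => hD0 _ _) he' he'cv)) as h.
  apply hD1; pose proof (hD0 x x') as h0.
  destruct (D x x'); simpl in h, h0; [f_equal; lra | contradiction].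
Qed.

Section CoupledIteration.

Variables (X : Type) (D : X -> X -> ER) (le : X -> X -> Prop) (F : X -> X -> X) (k : R).
Hypothesis (D_ge0 : forall x y, ER_le (Fin 0) (D x y)).
Hypothesis (D_sym : forall x y, D x y = D y x).
Hypothesis (le_trans : forall x y z, le x y -> le y z -> le x z).
Hypothesis (F_mono : mixed_monotone le F).
Hypothesis (k_ge0 : 0 <= k).
Hypothesis (F_contr : forall x y u v, le u x -> le y v ->
  ER_le (D (F x y) (F u v)) (ER_scal (k / 2) (ER_add (D x u) (D y v)))).

Definition coupled_map (p : X * X) : X * X := (F (fst p) (snd p), F (snd p) (fst p)).

Definition D2 (p q : X * X) : ER := ER_add (D (fst p) (fst q)) (D (snd p) (snd q)).

Lemma D2_sym p q : D2 p q = D2 q p.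
Proof. unfold D2; rewrite (D_sym (fst p)), (D_sym (snd p)); reflexivity. Qed.

Lemma coupled_map_mono p q : le2 le p q -> le2 le (coupled_map p) (coupled_map q).
Proof.
  destruct F_mono as [mono1 mono2]; intros [h1 h2]; split; simpl.
  - apply le_trans with (F (fst q) (snd p)); [apply mono1 | apply mono2]; assumption.
  - apply le_trans with (F (snd p) (fst q)); [apply mono1 | apply mono2]; assumption.
Qed.

Lemma coupled_map_contr p q : comparable2 le p q ->
  ER_le (D2 (coupled_map p) (coupled_map q)) (ER_scal k (D2 p q)).
Proof.
  assert (hle : forall p q, le2 le q p ->
            ER_le (D2 (coupled_map p) (coupled_map q)) (ER_scal k (D2 p q))).
  { intros [p1 p2] [q1 q2] [h1 h2]; simpl in h1, h2; unfold D2, coupled_map; simpl.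
    apply ER_add_le_scal; simpl; [exact k_ge0 | apply F_contr; assumption |].
    rewrite D_sym, (D_sym p1), (D_sym p2), ER_add_comm.
    apply F_contr; assumption. }
  intros [h | h]; [rewrite D2_sym, (D2_sym p) |]; apply hle; exact h.
Qed.

Lemma coupled_iter_comparable w p : coupled_map w = w -> comparable2 le p w ->
  forall n, comparable2 le (Nat.iter n coupled_map p) w.
Proof.
  intros hw hp n; induction n as [|n IH]; [exact hp |]; simpl.
  rewrite <- hw; destruct IH; [left | right]; apply coupled_map_mono; assumption.
Qed.

Lemma coupled_iter_D2_le w p r : coupled_map w = w -> comparable2 le p w ->
  D2 p w = Fin r -> forall n, ER_le (D2 (Nat.iter n coupled_map p) w) (Fin (k ^ n * r)).
Proof.
  intros hw hp hr n; induction n as [|n IH]; simpl.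
  - rewrite hr; simpl; lra.
  - rewrite <- hw at 1.
    eapply ER_le_trans; [apply coupled_map_contr, coupled_iter_comparable; assumption |].
    rewrite Rmult_assoc; apply ER_le_scal; assumption.
Qed.

Lemma coupled_iter_converges u v z1 z2 :
  coupled_fixed_point F u v -> comparable2 le (z1, z2) (u, v) ->
  D u z1 <> PInf -> D v z2 <> PInf ->
  exists r, forall n,
    ER_le (D (fst (Nat.iter n coupled_map (z1, z2))) u) (Fin (k ^ n * r)) /\
    ER_le (D (snd (Nat.iter n coupled_map (z1, z2))) v) (Fin (k ^ n * r)).
Proof.
  intros [hu hv] hcomp hfin1 hfin2.
  assert (hw : coupled_map (u, v) = (u, v)) by (unfold coupled_map; simpl; rewrite <- hu, <- hv; reflexivity).
  rewrite D_sym in hfin1, hfin2.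
  destruct (D z1 u) as [r1|] eqn:h1, (D z2 v) as [r2|] eqn:h2; try contradiction.
  exists (r1 + r2); intros n.
  pose proof (coupled_iter_D2_le _ _ (r1 + r2) hw hcomp) as hD2.
  unfold D2 in hD2; simpl in hD2; rewrite h1, h2 in hD2; specialize (hD2 eq_refl n).
  split.
  - exact (ER_add_le_l _ _ _ (D_ge0 _ _) hD2).
  - rewrite ER_add_comm in hD2; exact (ER_add_le_l _ _ _ (D_ge0 _ _) hD2).
Qed.

End CoupledIteration.

Theorem mainTheorem7 (X : Type) (D : X -> X -> ER) (le : X -> X -> Prop)
  (F : X -> X -> X) (k : R)
  (hD : is_JS_metric D) (hle : is_partial_order le)
  (hmono : mixed_monotone le F)
  (hk : 0 <= k < 1)
  (hcontr : forall x y u v, le u x -> le y v ->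
      ER_le (D (F x y) (F u v)) (ER_scal (k / 2) (ER_add (D x u) (D y v))))
  (x y xs ys : X)
  (hfix1 : coupled_fixed_point F x y) (hfix2 : coupled_fixed_point F xs ys)
  (hincomp : ~ comparable2 le (x, y) (xs, ys))
  (z1 z2 : X)
  (hbound : (le2 le (x, y) (z1, z2) /\ le2 le (xs, ys) (z1, z2)) \/
            (le2 le (z1, z2) (x, y) /\ le2 le (z1, z2) (xs, ys)))
  (hfin : D x z1 <> PInf /\ D y z2 <> PInf /\ D xs z1 <> PInf /\ D ys z2 <> PInf) :
  x = xs /\ y = ys.
Proof.
  pose proof hD as [hD0 [_ [hDsym _]]].
  destruct hle as [_ [_ hltrans]].
  destruct hfin as [f1 [f2 [f3 f4]]].
  assert (hcomp : comparable2 le (z1, z2) (x, y) /\ comparable2 le (z1, z2) (xs, ys)).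
  { unfold comparable2; destruct hbound as [[] | []]; auto. }
  destruct hcomp as [hc1 hc2].
  destruct (coupled_iter_converges X D le F k hD0 hDsym hltrans hmono (proj1 hk) hcontr
              x y z1 z2 hfix1 hc1 f1 f2) as [r1 hr1].
  destruct (coupled_iter_converges X D le F k hD0 hDsym hltrans hmono (proj1 hk) hcontr
              xs ys z1 z2 hfix2 hc2 f3 f4) as [r2 hr2].
  split.
  - apply (JS_limit_unique D _ _ _ _ _ hD (fun n => proj1 (hr1 n)) (Un_cv_pow_scal k r1 hk)
             (fun n => proj1 (hr2 n)) (Un_cv_pow_scal k r2 hk)).
  - apply (JS_limit_unique D _ _ _ _ _ hD (fun n => proj2 (hr1 n)) (Un_cv_pow_scal k r1 hk)
             (fun n => proj2 (hr2 n)) (Un_cv_pow_scal k r2 hk)).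
Qed.
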